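(* Let $x_1<\dots<x_M$ be nodes of a periodic 1D grid on $[0,L)$, extended by $x_{i+M}=x_i+L$, and let $p\in\mathbb N$. For each $i$ let $\ell_{i,\alpha}$, $\alpha=-p,\dots,p+1$, be the $2p+2$ Lagrange polynomials (of degree $2p+1$) on the nodes $x_{i-p},\dots,x_{i+p+1}$, i.e. $\ell_{i,\alpha}(x_{i+\gamma})=\delta_{\alpha,\gamma}$ for $\gamma=-p,\dots,p+1$, and define the $2p+1$ polynomials $\hbar_{i,\alpha}(x)=\sum_{\beta=\alpha+1}^{p+1}\ell'_{i,\beta}(x)$, $\alpha=-p,\dots,p$. For periodic arrays $\mathbf f=(f_i)$, $\mathbf g=(g_i)$ define, for $x\in[x_i,x_{i+1})$, $$(i_0\mathbf f)(x)=\sum_{\alpha=-p}^{p+1}f_{i+\alpha}\ell_{i,\alpha}(x),\qquad (i_1\mathbf g)(x)=\sum_{\alpha=-p}^{p}g_{i+\alpha}\hbar_{i,\alpha}(x).$$ Then: (a) $r_0\, i_0\, r_0(\phi)=r_0(\phi)$ for all $L$-periodic $\phi\in H^1$; (b) $r_1\, i_1\, r_1(\psi)=r_1(\psi)$ for all $L$-periodic $\psi\in L^2$; (c) $\frac{d}{dx}(i_0\mathbf f)(x)=(i_1\,\mathbb d\mathbf f)(x)$ for every array $\mathbf f$ (on each cell $[x_i,x_{i+1})$).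
   Context: $r_0$ is the point-value reduction $r_0(\phi)_i=\phi(x_i)$; $r_1$ is the cell-integral reduction $r_1(\psi)_i=\int_{x_i}^{x_{i+1}}\psi(x)\,dx$; $\mathbb d$ is the periodic forward difference $(\mathbb d\mathbf f)_i=f_{i+1}-f_i$. Indices of arrays are taken modulo $M$. *)

From HB Require Import structures.
From mathcomp Require Import all_boot all_order all_algebra.
From mathcomp Require Import all_classical all_reals all_analysis.
Set Implicit Arguments. Unset Strict Implicit. Unset Printing Implicit Defensive.
Import Order.TTheory GRing.Theory Num.Theory.
Local Open Scope classical_set_scope.
Local Open Scope ring_scope.

Section Defs.
Variable R : realType.

(* offset alpha = k - p for k in 0 .. 2p+1 *)
Definition off (p k : nat) : int := k%:Z - p%:Z.

Definition lag (x : int -> R) (p : nat) (i : int) (k : nat) : {poly R} :=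
  \prod_(j < (2 * p + 2)%N | j != k :> nat)
     (('X - (x (i + off p j))%:P) * ((x (i + off p k) - x (i + off p j))^-1)%:P).

Definition hbar (x : int -> R) (p : nat) (i : int) (k : nat) : {poly R} :=
  \sum_(k.+1 <= j < (2 * p + 2)%N) (lag x p i j)^`().

Definition cell (x : int -> R) (y : R) : int :=
  xget 0%Z [set i : int | x i <= y < x (i + 1)].

Definition i0 (x : int -> R) (p : nat) (f : int -> R) (y : R) : R :=
  let i := cell x y in
  \sum_(k < (2 * p + 2)%N) f (i + off p k) * (lag x p i k).[y].

Definition i1 (x : int -> R) (p : nat) (g : int -> R) (y : R) : R :=
  let i := cell x y in
  \sum_(k < (2 * p + 1)%N) g (i + off p k) * (hbar x p i k).[y].

Definition i0_cell (x : int -> R) (p : nat) (f : int -> R) (i : int) (y : R) : R :=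
  \sum_(k < (2 * p + 2)%N) f (i + off p k) * (lag x p i k).[y].

Definition r0 (x : int -> R) (phi : R -> R) : int -> R := fun i => phi (x i).
Definition r1 (x : int -> R) (psi : R -> R) : int -> R :=
  fun i => Rintegral lebesgue_measure `[x i, x (i + 1)] psi.
Definition dd (f : int -> R) : int -> R := fun i => f (i + 1) - f i.

Definition periodic_array (M : nat) (f : int -> R) := forall i, f (i + M%:Z) = f i.
Definition periodic_fun (L : R) (phi : R -> R) := forall t, phi (t + L) = phi t.

Definition periodic_grid (M : nat) (L : R) (x : int -> R) :=
  [/\ (0 < M)%N, (forall i, x i < x (i + 1)), (forall i, x (i + M%:Z) = x i + L),
      0 <= x 1 & x M%:Z < L].

Definition L2loc (psi : R -> R) :=
  measurable_fun setT psi /\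
  forall a b, lebesgue_measure.-integrable `[a, b] (fun t => ((psi t) ^+ 2)%:E).

(* phi in H^1_loc: phi is (the continuous representative of) a function with a
   weak derivative g in L^2_loc, i.e. phi b - phi a = int_a^b g *)
Definition H1loc (phi : R -> R) :=
  L2loc phi /\
  exists g : R -> R, L2loc g /\
    forall a b, a <= b -> phi b - phi a = Rintegral lebesgue_measure `[a, b] g.

End Defs.

From HB Require Import structures.
From mathcomp Require Import all_boot all_order all_algebra.
From mathcomp Require Import all_classical all_reals all_analysis.
From mathcomp Require Import zify.
Import Order.TTheory GRing.Theory Num.Theory numFieldNormedType.Exports.
Local Open Scope classical_set_scope.
Local Open Scope ring_scope.

(* Since [lag x p i k] takes the value [(k == m)] at the node [m] of cell [i],
   the interpolant [i0 f] agrees with [f] at every node, which is (a).  For (c),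
   summation by parts turns the derivative of [sum_k f_(i+k-p) *: lag_k] into
   [sum_k (f_(i+k-p+1) - f_(i+k-p)) *: hbar_k]; the boundary term vanishes since
   the [lag_k] sum to [1].  For (b), on a cell [i1 g] only sees [g] at the
   nodes, where [g] is the difference array of its partial sums [f]; by (c),
   [i1 g] is then the derivative of the interpolant of [f], and the fundamental
   theorem of calculus gives [int_(x_j)^(x_(j+1)) i1 g = f_(j+1) - f_j = g_j]. *)

Section Grid.
Variables (R : realType) (x : int -> R).
Hypothesis x_incr : forall i, x i < x (i + 1).

Lemma grid_homo_lt : {homo x : i j / i < j}.
Proof.
have x_ltS i (n : nat) : x i < x (i + n.+1%:Z).
  elim: n => [|n IH]; first exact: x_incr.
  by apply: lt_trans IH _; have -> : i + n.+2%:Z = i + n.+1%:Z + 1 by lia.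
move=> i j ij; have -> : j = i + (absz (j - i - 1)%R).+1%:Z by lia.
exact: x_ltS.
Qed.

Lemma grid_mono_le : {mono x : i j / i <= j}.
Proof. exact: le_mono grid_homo_lt. Qed.

Lemma grid_mono_lt : {mono x : i j / i < j}.
Proof. exact: leW_mono grid_mono_le. Qed.

Lemma grid_inj : injective x.
Proof. exact: inc_inj grid_mono_le. Qed.

Lemma cellE i y : x i <= y < x (i + 1) -> cell x y = i.
Proof.
move=> yi; apply: xget_unique => // j /andP[xjy yxj].
have := le_lt_trans (proj1 (andP yi)) yxj.
have := le_lt_trans xjy (proj2 (andP yi)).
rewrite !grid_mono_lt; lia.
Qed.

End Grid.

Arguments grid_inj {R x}.
Arguments cellE {R x} x_incr {i y}.

Section Lagrange.
Variables (R : realType) (x : int -> R) (p : nat) (i : int).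
Hypothesis x_incr : forall i, x i < x (i + 1).

Local Notation n := (2 * p + 2)%N.
Local Notation node m := (x (i + off p m)).

Lemma node_inj (m k : nat) : node m = node k -> m = k.
Proof. by move/(grid_inj x_incr); rewrite /off; lia. Qed.

Lemma lag_node (k m : nat) : (k < n)%N -> (m < n)%N ->
  (lag x p i k).[node m] = (k == m)%:R.
Proof.
move=> kn mn; rewrite /lag horner_prod; case: eqP => [<-|/eqP km].
  apply: big1 => j jk; rewrite hornerM hornerXsubC hornerC mulfV // subr_eq0.
  by apply: contra jk => /eqP/node_inj ->.
rewrite (bigD1 (Ordinal mn)) 1?eq_sym //=.
by rewrite hornerM hornerXsubC subrr !mul0r.
Qed.

Lemma size_lag (k : nat) : (k < n)%N -> (size (lag x p i k) <= n)%N.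
Proof.
move=> kn; rewrite /lag; apply: leq_trans (size_poly_prod_leq _ _) _.
set P := (X in #|X|).
have card_P : #|P| = n.-1.
  rewrite -[X in _ = X.-1](card_ord n) -(cardC1 (Ordinal kn)).
  by apply: eq_card => j; rewrite !inE.
set s := (\sum_(_ | _) _)%N.
have : (s <= \sum_(j < n | P j) 2)%N.
  apply: leq_sum => j _; rewrite mulrC mul_polyC.
  by apply: leq_trans (size_scale_leq _ _) _; rewrite size_XsubC.
rewrite sum_nat_const card_P; lia.
Qed.

Lemma sum_lag : \sum_(k < n) lag x p i k = 1.
Proof.
apply/eqP; rewrite -subr_eq0; apply/eqP.
apply: (@roots_geq_poly_eq0 _ _ [seq node m | m <- iota 0 n]).
- apply/allP => y /mapP[m]; rewrite mem_iota add0n => /andP[_ mn] ->.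
  rewrite /root hornerD hornerN hornerC horner_sum subr_eq0.
  rewrite (bigD1 (Ordinal mn)) //= lag_node // eqxx big1 ?addr0 //.
  move=> j jm; rewrite lag_node //; case: eqP => // jm'.
  by move: jm; rewrite -val_eqE /= jm' eqxx.
- by rewrite map_inj_in_uniq ?iota_uniq // => a b _ _; exact: node_inj.
- rewrite size_map size_iota; apply: leq_trans (size_polyD _ _) _.
  rewrite size_polyN size_polyC oner_neq0 geq_max; apply/andP; split; last lia.
  apply: (big_ind (fun q : {poly R} => size q <= n)%N) => [|a b ha hb|j _].
  + by rewrite size_poly0.
  + by apply: leq_trans (size_polyD _ _) _; rewrite geq_max ha hb.
  + exact: size_lag.
Qed.

End Lagrange.

Lemma summation_by_parts (S : pzRingType) (V : lmodType S)
    (F : nat -> S) (a : nat -> V) (m : nat) :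
  \sum_(k < m) (F k.+1 - F k) *: \sum_(k.+1 <= j < m.+1) a j =
  \sum_(j < m.+1) F j *: a j - F 0%N *: \sum_(j < m.+1) a j.
Proof.
elim: m => [|m IH]; first by rewrite big_ord0 !big_ord1 subrr.
have tail_recr (k : 'I_m.+1) :
    \sum_(k.+1 <= j < m.+2) a j = \sum_(k.+1 <= j < m.+1) a j + a m.+1.
  by rewrite big_nat_recr.
under eq_bigr => k _ do rewrite tail_recr scalerDr.
rewrite big_split /= -scaler_suml big_ord_recr /= big_geq // scaler0 addr0 IH.
rewrite -(big_mkord xpredT (fun k => F k.+1 - F k)) telescope_sumr //.
rewrite (big_ord_recr m.+1 (fun j => F j *: a j)) (big_ord_recr m.+1 a) /=.
by rewrite scalerBl scalerDr opprD addrACA.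
Qed.

Section Integration.
Variable R : realType.

Lemma Rintegral_deriv_poly (P : {poly R}) (a b : R) : a < b ->
  Rintegral lebesgue_measure `[a, b] (horner P^`()) = P.[b] - P.[a].
Proof.
move=> ab; rewrite /Rintegral (@continuous_FTC2 _ _ (horner P)) //.
- by apply: continuous_subspaceT => z; exact: continuous_horner.
- split; first by move=> z _; exact: derivable_horner.
  + by apply: cvg_at_right_filter; exact: continuous_horner.
  + by apply: cvg_at_left_filter; exact: continuous_horner.
- by move=> z _; rewrite -derivE.
Qed.

Lemma eq_Rintegral_itv_co (u v : R -> R) (a b : R) :
  {within `[a, b], continuous v} -> {in `[a, b[, u =1 v} ->
  Rintegral lebesgue_measure `[a, b] u = Rintegral lebesgue_measure `[a, b] v.
Proof.
move=> cv uv.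
have iv : lebesgue_measure.-integrable `[a, b] (EFin \o v).
  by apply: continuous_compact_integrable => //; exact: segment_compact.
have {}iv : lebesgue_measure.-integrable `[a, b[ (EFin \o v).
  by apply: integrableS iv => //; apply: subset_itvl; rewrite bnd_simp.
rewrite -Rintegral_itv_bndo_bndc; last first.
  by apply: eq_integrable iv => // z /[!inE] /uv /= ->.
by rewrite -Rintegral_itv_bndo_bndc //; apply: eq_Rintegral => z /[!inE] /uv.
Qed.

End Integration.

Section Interpolation.
Variables (R : realType) (x : int -> R) (p : nat).
Hypothesis x_incr : forall i, x i < x (i + 1).

Definition i0_poly (f : int -> R) (i : int) : {poly R} :=
  \sum_(k < 2 * p + 2) f (i + off p k) *: lag x p i k.

Definition i1_poly (g : int -> R) (i : int) : {poly R} :=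
  \sum_(k < 2 * p + 1) g (i + off p k) *: hbar x p i k.

Lemma i0_cellE f i : i0_cell x p f i = horner (i0_poly f i).
Proof.
by apply/funext => y; rewrite /i0_poly horner_sum; under eq_bigr do rewrite hornerZ.
Qed.

Lemma i0_on_cell f i y : x i <= y < x (i + 1) -> i0 x p f y = (i0_poly f i).[y].
Proof. by move=> /(cellE x_incr) yi; rewrite /i0 yi -i0_cellE. Qed.

Lemma i1_on_cell g i y : x i <= y < x (i + 1) -> i1 x p g y = (i1_poly g i).[y].
Proof.
move=> /(cellE x_incr) yi; rewrite /i1 yi /i1_poly horner_sum.
by under [RHS]eq_bigr do rewrite hornerZ.
Qed.

Lemma horner_i0_poly f i j : i - p%:Z <= j <= i + p.+1%:Z ->
  (i0_poly f i).[x j] = f j.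
Proof.
move=> ij; have -> : j = i + off p (absz (j - i + p)%R) by rewrite /off; lia.
have jn : (absz (j - i + p)%R < 2 * p + 2)%N by lia.
rewrite /i0_poly horner_sum (bigD1 (Ordinal jn)) //= hornerZ lag_node //.
rewrite eqxx mulr1 big1 ?addr0 // => k.
by rewrite -val_eqE hornerZ lag_node // => /negbTE ->; rewrite mulr0.
Qed.

Lemma deriv_i0_poly f i : (i0_poly f i)^`() = i1_poly (dd f) i.
Proof.
pose F k := f (i + off p k); pose a j := (lag x p i j)^`().
have n2 : (2 * p + 2 = (2 * p + 1).+1)%N by lia.
have sum_a : \sum_(j < (2 * p + 1).+1) a j = 0.
  by rewrite -raddf_sum -n2 sum_lag //= -polyC1 derivC.
have ddF k : dd f (i + off p k) = F k.+1 - F k.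
  by rewrite /dd /F /off; congr (f _ - _); lia.
rewrite /i1_poly /hbar; under eq_bigr do rewrite ddF n2.
rewrite summation_by_parts sum_a scaler0 subr0 /i0_poly raddf_sum n2.
by apply: eq_bigr => k _; exact: derivZ.
Qed.

Lemma r0_i0 (f : int -> R) : r0 x (i0 x p f) = f.
Proof.
apply/funext => j; rewrite /r0 (i0_on_cell f j) ?lexx ?x_incr //.
by rewrite horner_i0_poly //; lia.
Qed.

Lemma is_derive_i0_cell f i y : x i <= y < x (i + 1) ->
  is_derive y 1 (i0_cell x p f i) (i1 x p (dd f) y).
Proof.
move=> yi; rewrite i0_cellE (i1_on_cell _ _ _ yi) -deriv_i0_poly.
exact: is_derive_poly.
Qed.

Lemma is_derive_i0 f i y : x i < y < x (i + 1) ->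
  is_derive y 1 (i0 x p f) (i1 x p (dd f) y).
Proof.
move=> /andP[iy yi].
have yi' : x i <= y < x (i + 1) by rewrite (ltW iy) yi.
apply: near_eq_is_derive (is_derive_i0_cell f i y yi').
near=> z; rewrite i0_cellE (i0_on_cell f i z) //.
have : z \in `]x i, x (i + 1)[.
  by near: z; apply: near_in_itvoo; rewrite in_itv /= iy yi.
by rewrite in_itv /= => /andP[/ltW -> ->].
Unshelve. all: by end_near.
Qed.

(* Partial sums of [g] from index [a]; only the values at [m >= a] are used. *)
Definition antidiff (g : int -> R) (a m : int) : R :=
  \sum_(l < absz (m - a)%R) g (a + l%:Z).

Lemma dd_antidiff g a (k : nat) : dd (antidiff g a) (a + k) = g (a + k).
Proof.
rewrite /dd /antidiff.
have -> : absz (a + k + 1 - a)%R = k.+1 by lia.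
have -> : absz (a + k - a)%R = k by lia.
by rewrite big_ord_recr /= addrAC subrr add0r.
Qed.

Lemma r1_i1 (g : int -> R) : r1 x (i1 x p g) = g.
Proof.
apply/funext => j; pose f := antidiff g (j - p%:Z).
have i1_gE : i1_poly g j = (i0_poly f j)^`().
  rewrite deriv_i0_poly; apply: eq_bigr => k _.
  by rewrite (_ : j + off p k = j - p%:Z + k) ?dd_antidiff //; rewrite /off; lia.
rewrite /r1 (@eq_Rintegral_itv_co _ _ (horner (i0_poly f j)^`())).
- rewrite Rintegral_deriv_poly // !horner_i0_poly; try lia.
  by have := dd_antidiff g (j - p%:Z) p; rewrite subrK.
- by apply: continuous_subspaceT => z; exact: continuous_horner.
- by move=> z; rewrite in_itv => /(i1_on_cell g j z) ->; rewrite i1_gE.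
Qed.

End Interpolation.

Theorem theorem2 (R : realType) (M : nat) (L : R) (x : int -> R) (p : nat) :
  periodic_grid M L x ->
  (* (a) *)
  (forall phi : R -> R, periodic_fun L phi -> H1loc phi ->
     r0 x (i0 x p (r0 x phi)) = r0 x phi) /\
  (* (b) *)
  (forall psi : R -> R, periodic_fun L psi -> L2loc psi ->
     r1 x (i1 x p (r1 x psi)) = r1 x psi) /\
  (* (c) *)
  (forall f : int -> R, periodic_array M f ->
     forall (i : int) (y : R), x i <= y < x (i + 1) ->
       is_derive y 1 (i0_cell x p f i) (i1 x p (dd f) y) /\
       (x i < y -> is_derive y 1 (i0 x p f) (i1 x p (dd f) y))).
Proof.
case=> _ x_incr _ _ _; split; [|split].
- by move=> phi _ _; exact: r0_i0.
- by move=> psi _ _; exact: r1_i1.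
- move=> f _ i y yi; split; first exact: is_derive_i0_cell.
  by move=> iy; apply: (@is_derive_i0 _ _ _ x_incr _ i); rewrite iy; case/andP: yi.
Qed.
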